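(* Let $n=1$ or let $n$ be a prime with $n\equiv 1\pmod{10}$, and let $d=17n-1$. Then there exists a Cayley graph of diameter two, degree $d$, and order $\frac{200}{289}(d+1)^2$ (i.e. with $200n^2$ vertices).
   Context: For a finite group $\Gamma$ and a generating set $X\subset\Gamma$ with $1_\Gamma\notin X$ and $X=X^{-1}$, the Cayley graph $\mathrm{Cay}(\Gamma,X)$ has vertex set $\Gamma$ and edges $\{g,h\}$ whenever $g^{-1}h\in X$; it is a simple undirected $|X|$-regular graph, and its degree is $|X|$. *)

From mathcomp Require Import all_boot all_order all_fingroup.
Set Implicit Arguments. Unset Strict Implicit. Unset Printing Implicit Defensive.
Local Open Scope group_scope.

Definition cayley_rel (gT : finGroupType) (X : {set gT}) : rel gT :=
  fun g h => g^-1 * h \in X.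

Definition cayley_conn_set (gT : finGroupType) (X : {set gT}) : Prop :=
  [/\ 1 \notin X, X^-1 = X & <<X>> = [set: gT]].

Definition cayley_within (gT : finGroupType) (X : {set gT}) (k : nat) (g h : gT) : Prop :=
  exists p : seq gT, [&& path (cayley_rel X) g p, last g p == h & size p <= k].

Definition cayley_diameter (gT : finGroupType) (X : {set gT}) (k : nat) : Prop :=
  (forall g h : gT, cayley_within X k g h) /\
  (exists g h : gT, ~ cayley_within X k.-1 g h) /\ 0 < k.

From mathcomp Require Import all_boot all_order all_fingroup.
From HB Require Import structures.
From mathcomp Require Import all_algebra zify.
Set Implicit Arguments. Unset Strict Implicit. Unset Printing Implicit Defensive.
Import GRing.Theory.
Local Open Scope ring_scope.

(* Let K = Z_10 wr Z_2 (200 elements).  The group G = (V x Z_10) wr Z_2 is the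
   semidirect product of V^2 with K acting by swapping coordinates.  Above each
   element y of an inverse-closed 16-element set Y of K put a line of V^2 (two
   lines meeting in 0 above the pure swap); the union X of these has
   15|V| + (2|V| - 1) elements.  Every k in K factors as y1 y2 with y1, y2 in Y
   so that the line above y1 and the y1-image of the line above y2 have
   directions whose determinant is between 1 and 10 in absolute value; when
   multiplication by 1, ..., 10 is injective on V these two lines span V^2, so
   X^2 = G.  The facts about K are finite checks. *)

Definition swap_if {T : Type} (s : bool) (x : T * T) : T * T :=
  if s then (x.2, x.1) else x.

Section Wreath.
Variable W : finZmodType.

Lemma swap_ifD s (x y : W * W) : swap_if s (x + y) = swap_if s x + swap_if s y.
Proof. by case: s. Qed.

Lemma swap_if_comp s t (x : W * W) : swap_if s (swap_if t x) = swap_if (s (+) t) x.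
Proof. by case: s; case: t; case: x. Qed.

Definition wreath := (W * W * bool)%type.
HB.instance Definition _ := Finite.on wreath.

Definition wreath_mul (x y : wreath) : wreath := (x.1 + swap_if x.2 y.1, x.2 (+) y.2).
Definition wreath_one : wreath := (0, false).
Definition wreath_inv (x : wreath) : wreath := (- swap_if x.2 x.1, x.2).

Lemma wreath_mulA : associative wreath_mul.
Proof.
case=> a s [b t] [c u]; rewrite /wreath_mul /= swap_ifD swap_if_comp addrA.
by rewrite addbA.
Qed.

Lemma wreath_mul1 : left_id wreath_one wreath_mul.
Proof. by case=> a s; rewrite /wreath_mul /= add0r. Qed.

Lemma wreath_mulV : left_inverse wreath_one wreath_inv wreath_mul.
Proof. by case=> a s; rewrite /wreath_mul /wreath_inv /= addNr addbb. Qed.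

HB.instance Definition _ :=
  Finite_isGroup.Build wreath wreath_mulA wreath_mul1 wreath_mulV.
End Wreath.

HB.instance Definition _ (V W : finZmodType) := GRing.Zmodule.on (V * W)%type.

Section Lines.
Variable V : finZmodType.

Definition line_pt (t : V) (b : int * int) : V * V := (t *~ b.1, t *~ b.2).
Definition line (b : int * int) : {set V * V} := [set line_pt t b | t : V].
Definition det2 (b c : int * int) : int := b.1 * c.2 - b.2 * c.1.

Lemma mem_line t b : line_pt t b \in line b.
Proof. exact: imset_f. Qed.

Lemma line_ptNl t b : line_pt (- t) b = - line_pt t b.
Proof. by rewrite /line_pt !mulNrz. Qed.

Lemma line_ptNr t b : line_pt t (- b.1, - b.2) = - line_pt t b.
Proof. by rewrite /line_pt /= !mulrNz. Qed.

Lemma swap_if_line_pt s t b : swap_if s (line_pt t b) = line_pt t (swap_if s b).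
Proof. by case: s. Qed.

Lemma card_line b : injective (fun t : V => t *~ b.1) -> #|line b| = #|V|.
Proof. by move=> inj; rewrite card_imset // => t u [/inj]. Qed.

(* Cramer's rule, with [x *~ det2 b c] inverted by finiteness. *)
Lemma line_pt_span (b c : int * int) (w : V * V) :
  injective (fun x : V => x *~ det2 b c) ->
  exists t u, w = line_pt t b + line_pt u c.
Proof.
case: b c => [b1 b2] [c1 c2]; rewrite /det2 /=; set D := _ - _ => inj.
have [g _ gK] := injF_bij inj.
have gD y : g y *~ D = y := gK y.
exists (g (w.1 *~ c2 - w.2 *~ c1)), (g (w.2 *~ b1 - w.1 *~ b2)).
case: w => w1 w2; rewrite /line_pt /=; congr (_, _); apply: inj => /=.
  rewrite mulrzDl mulrzAC gD mulrzAC gD !mulrzBl -!mulrzA /D mulrzBr.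
  by rewrite (mulrC c2 b1) (mulrC c1 b1) addrA (addrNK (w2 *~ (b1 * c1))).
rewrite mulrzDl mulrzAC gD mulrzAC gD !mulrzBl -!mulrzA /D mulrzBr.
by rewrite (mulrC c2 b2) (mulrC c1 b2) [RHS]addrC addrA (addrNK (w1 *~ (b2 * c2))).
Qed.
End Lines.
Arguments line {V} b.

Definition K := wreath 'Z_10.
Definition kel (a b : nat) (s : bool) : K := ((inZp a, inZp b), s).

(* The connection set lives above the 16 elements of K listed here; each comes
   with the direction(s) of the line(s) of [V * V] above it. *)
Definition Ytable : seq (K * seq (int * int)) :=
  [:: (kel 0 0 true, [:: (1, 1); (1, -1)]);
      (kel 3 5 true, [:: (3, -1)]); (kel 5 7 true, [:: (1, -3)]);
      (kel 0 5 true, [:: (3, -1)]); (kel 5 0 true, [:: (1, -3)]);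
      (kel 5 1 true, [:: (1, -2)]); (kel 9 5 true, [:: (2, -1)]);
      (kel 2 1 true, [:: (2, -1)]); (kel 9 8 true, [:: (1, -2)]);
      (kel 1 8 true, [:: (1, 2)]);  (kel 2 9 true, [:: (2, 1)]);
      (kel 3 2 false, [:: (1, -1)]); (kel 7 8 false, [:: (1, -1)]);
      (kel 1 4 false, [:: (1, 3)]); (kel 9 6 false, [:: (1, 3)]);
      (kel 0 5 false, [:: (3, 1)])].

Definition Yseq : seq K := map fst Ytable.

(* The finite checks below run on this encoding of K by natural numbers:
   computing directly with ordinals is far too slow. *)
Definition natK := (nat * nat * bool)%type.
Definition encode (k : K) : natK := ((val k.1.1, val k.1.2), k.2).
Definition natK_mul (x y : natK) : natK :=
  let c := swap_if x.2 y.1 in (((x.1.1 + c.1) %% 10, (x.1.2 + c.2) %% 10)%N, x.2 (+) y.2).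
Definition natK_inv (x : natK) : natK :=
  let c := swap_if x.2 x.1 in (((10 - c.1) %% 10, (10 - c.2) %% 10)%N, x.2).
Definition natK_enum : seq natK :=
  [seq (ab, s) | ab <- [seq (a, b) | a <- iota 0 10, b <- iota 0 10],
                 s <- [:: true; false]].

Definition Ycodes : seq natK := map encode Yseq.
Definition Ydirs : seq (natK * seq (int * int)) := [seq (encode e.1, e.2) | e <- Ytable].
Definition dirs (c : natK) : seq (int * int) :=
  flatten [seq e.2 | e <- Ydirs & e.1 == c].

Lemma encode_inj : injective encode.
Proof.
case=> [[a1 a2] s] [[b1 b2] t]; rewrite /encode /= => -[h1 h2 ->].
by congr (_, _, _); apply/val_inj.
Qed.

Lemma encode_mul (x y : K) : encode (x * y)%g = natK_mul (encode x) (encode y).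
Proof. by case: x => [[a1 a2] s]; case: y => [[b1 b2] t]; case: s. Qed.

Lemma encode_inv (x : K) : encode x^-1%g = natK_inv (encode x).
Proof.
case: x => [[a1 a2] s]; rewrite /encode /natK_inv /=.
by case: s => /=; congr (_, _, _) => //=; rewrite ?modnDml // addnC.
Qed.

Lemma encode_in_enum (k : K) : encode k \in natK_enum.
Proof.
case: k => [[a b] s]; rewrite /encode /= /natK_enum.
apply: allpairs_f; last by case: s.
by apply: allpairs_f; rewrite mem_iota; apply: ltn_ord.
Qed.

Definition small_det (b c : int * int) : bool := (0 < `|det2 b c| <= 10)%N.

Definition factors_in_Y (c : natK) : bool :=
  has (fun c1 => has (fun c2 => (natK_mul c1 c2 == c) &&
    has (fun b => has (fun b' => small_det b (swap_if c1.2 b')) (dirs c2)) (dirs c1))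
  Ycodes) Ycodes.

Lemma all_factors_in_Y : all factors_in_Y natK_enum.
Proof. by vm_compute. Qed.

Definition dirs_inv_closed (c : natK) : bool :=
  all (fun b => let b' := swap_if c.2 b in
    has (fun d => (d == b') || (d == (- b'.1, - b'.2))) (dirs (natK_inv c))) (dirs c).

Lemma all_dirs_inv_closed : all dirs_inv_closed natK_enum.
Proof. by vm_compute. Qed.

Lemma dirs_swap : dirs (encode (kel 0 0 true)) = [:: (1, 1); (1, -1)].
Proof. by vm_compute. Qed.

Lemma dirs_single :
  all (fun c => if dirs c is [:: b] then (0 < `|b.1| <= 10)%N else false) (behead Ycodes).
Proof. by vm_compute. Qed.

Lemma uniq_Ycodes : uniq Ycodes.
Proof. by vm_compute. Qed.

Lemma dirs_one : dirs (encode 1%g) = [::].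
Proof. by vm_compute. Qed.

Lemma dirs_far : dirs (encode (kel 1 0 false)) = [::].
Proof. by vm_compute. Qed.

Lemma mem_Yseq (k : K) : (k \in Yseq) = (encode k \in Ycodes).
Proof. by rewrite mem_map // => x y; apply: encode_inj. Qed.

Lemma uniq_Yseq : uniq Yseq.
Proof. by have := uniq_Ycodes; rewrite map_inj_uniq //; apply: encode_inj. Qed.

Lemma dirs_notin_Y (k : K) : k \notin Yseq -> dirs (encode k) = [::].
Proof.
rewrite mem_Yseq /dirs => kY.
suff -> : [seq e <- Ydirs | e.1 == encode k] = [::] by [].
apply/eqP; rewrite -[_ == _]negbK -has_filter; apply: contra kY => /hasP [_ /mapP [[y bs] yY ->]].
by move=> /= /eqP <-; apply/map_f/(map_f fst yY).
Qed.

Section Construction.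
Variable V : finZmodType.
Hypothesis mulrn_inj : forall d, (0 < d <= 10)%N -> injective (fun x : V => x *+ d).

Lemma mulrz_inj (d : int) : (0 < `|d| <= 10)%N -> injective (fun x : V => x *~ d).
Proof.
case: d => [n|n] /= dn x y /=; first by rewrite -!pmulrn; apply: mulrn_inj.
by rewrite !NegzE !mulrNz -!pmulrn => /oppr_inj; apply: mulrn_inj.
Qed.

Definition G := wreath (V * 'Z_10)%type.
Definition mkG (v : V * V) (k : K) : G := ((v.1, k.1.1), (v.2, k.1.2), k.2).
Definition projK (x : G) : K := ((x.1.1.2, x.1.2.2), x.2).
Definition projV (x : G) : V * V := (x.1.1.1, x.1.2.1).

Lemma projK_mkG v k : projK (mkG v k) = k. Proof. by case: k => [[a b] s]. Qed.
Lemma projV_mkG v k : projV (mkG v k) = v. Proof. by case: v. Qed.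
Lemma mkG_proj x : mkG (projV x) (projK x) = x.
Proof. by case: x => [[[v1 a1] [v2 a2]] s]. Qed.

Lemma mkG_mul v k w l : (mkG v k * mkG w l)%g = mkG (v + swap_if k.2 w) (k * l)%g.
Proof.
case: v => v1 v2; case: w => w1 w2; case: k => [[a1 a2] s]; case: l => [[b1 b2] t].
by case: s.
Qed.

Lemma mkG_inv v k : (mkG v k)^-1%g = mkG (- swap_if k.2 v) k^-1%g.
Proof. by case: v => v1 v2; case: k => [[a1 a2] []]. Qed.

Definition fibre (k : K) : {set V * V} :=
  [set v | has (fun b => v \in line b) (dirs (encode k))].
Definition X : {set G} := [set x | projV x \in fibre (projK x)].

Lemma mem_X v k : (mkG v k \in X) = (v \in fibre k).
Proof. by rewrite inE projK_mkG projV_mkG. Qed.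

Lemma mem_fibre t b k : b \in dirs (encode k) -> line_pt t b \in fibre k.
Proof. by move=> bk; rewrite inE; apply/hasP; exists b; rewrite ?mem_line. Qed.

Lemma mulXX_onto x : exists x1 x2, [/\ x1 \in X, x2 \in X & (x1 * x2)%g = x].
Proof.
have := allP all_factors_in_Y _ (encode_in_enum (projK x)).
case/hasP=> _ /mapP [y1 _ ->] /hasP [_ /mapP [y2 _ ->]] /andP [/eqP y12].
case/hasP=> b b1 /hasP [c c2 det_ok].
have [t [u tu]] := line_pt_span (projV x) (mulrz_inj det_ok).
exists (mkG (line_pt t b) y1), (mkG (line_pt u c) y2).
rewrite !mem_X !mem_fibre // mkG_mul -[RHS]mkG_proj.
have -> : (y1 * y2)%g = projK x by apply: encode_inj; rewrite encode_mul.
by rewrite tu; case: y1 {b1 y12 det_ok tu} => [[a1 a2] []].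
Qed.

Lemma one_notin_X : (1%g : G) \notin X.
Proof. by rewrite !inE dirs_one. Qed.

Lemma X_invg_closed x : x \in X -> x^-1%g \in X.
Proof.
rewrite -[x]mkG_proj mem_X mkG_inv mem_X inE => /hasP [b bk /imsetP [t _ ->]].
have := allP (allP all_dirs_inv_closed _ (encode_in_enum (projK x))) _ bk.
rewrite -encode_inv swap_if_line_pt => /hasP [d dk /orP [] /eqP dE].
  by rewrite -line_ptNl; apply: mem_fibre; rewrite -dE.
by rewrite -line_ptNr; apply: mem_fibre; rewrite -dE.
Qed.

Lemma invX : X^-1%g = X.
Proof.
apply/setP => x; rewrite mem_invg; apply/idP/idP => /X_invg_closed //.
by rewrite invgK.
Qed.

Lemma gen_X : <<X>>%g = [set: G].
Proof.
apply/eqP; rewrite eqEsubset subsetT; apply/subsetP => x _.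
have [x1 [x2 [x1X x2X <-]]] := mulXX_onto x.
by rewrite groupM // mem_gen.
Qed.

Lemma cayley_within2 g h : cayley_within X 2 g h.
Proof.
have [x1 [x2 [x1X x2X x12]]] := mulXX_onto (g^-1 * h)%g.
exists [:: (g * x1)%g; (g * x1 * x2)%g].
by rewrite /= /cayley_rel !mulKg x1X x2X -mulgA x12 mulKVg eqxx.
Qed.

Lemma not_cayley_within1 : ~ cayley_within X 1 1%g (mkG 0 (kel 1 0 false)).
Proof.
case=> p /and3P [walk last_p size_p].
case: p walk last_p size_p => [|a [|b p]] //=.
  by move=> _ /eqP/(congr1 (fun x => encode (projK x))); rewrite projK_mkG.
rewrite /cayley_rel invg1 mul1g andbT => aX /eqP ea _.
by move: aX; rewrite ea mem_X inE dirs_far.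
Qed.

Lemma card_G : #|[set: G]| = (200 * #|V| ^ 2)%N.
Proof.
rewrite cardsT !card_prod card_bool card_ord.
move: #|V| => m; rewrite -[(Zp_trunc 10).+2]/10%N; lia.
Qed.

Lemma diagonals_meet : line (1, 1) :&: line (1, -1) = [set 0 : V * V].
Proof.
apply/setP => v; rewrite !inE; apply/andP/eqP => [|->]; last first.
  by split; apply/imsetP; exists 0; rewrite // /line_pt /= !mul0rz.
case=> /imsetP [t _ ->] /imsetP [u _ /eqP]; rewrite /line_pt /= xpair_eqE.
rewrite !mulr1z mulrN1z => /andP [/eqP tu /eqP tNu].
suff -> : t = 0 by [].
by apply: (@mulrn_inj 2) => //=; rewrite mul0rn mulr2n {1}tNu tu addNr.
Qed.

Lemma card_fibre_swap : #|fibre (kel 0 0 true)| = (2 * #|V| - 1)%N.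
Proof.
have -> : fibre (kel 0 0 true) = line (1, 1) :|: line (1, -1).
  by apply/setP => v; rewrite !inE dirs_swap /= orbF.
by rewrite cardsU diagonals_meet cards1 mul2n -addnn !card_line //; apply: mulrz_inj.
Qed.

Lemma card_fibre_single k b :
  dirs (encode k) = [:: b] -> (0 < `|b.1| <= 10)%N -> #|fibre k| = #|V|.
Proof.
move=> kb b1; rewrite -(card_line (mulrz_inj b1)); apply: eq_card => v.
by rewrite inE kb /= orbF.
Qed.

Lemma card_X_sum : #|X| = (\sum_(k : K) #|fibre k|)%N.
Proof.
have -> : X = [set mkG p.2 p.1 | p in [set p : K * (V * V) | p.2 \in fibre p.1]].
  apply/setP => x; apply/idP/imsetP => [xX | [[k v] kv ->]].
    by exists (projK x, projV x); rewrite ?mkG_proj // inE; rewrite inE in xX.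
  by rewrite mem_X; rewrite inE in kv.
rewrite card_imset => [|[k v] [l w] /= e]; last first.
  by move: (congr1 projK e) (congr1 projV e); rewrite !projK_mkG !projV_mkG => -> ->.
rewrite -sum1_card (eq_bigl (fun p => true && (p.2 \in fibre p.1))) => [|p]; last first.
  by rewrite inE.
rewrite -(pair_big_dep xpredT (fun k v => v \in fibre k) (fun _ _ => 1%N)).
by apply: eq_bigr => k _; rewrite sum1_card.
Qed.

Lemma card_X : #|X| = (17 * #|V| - 1)%N.
Proof.
rewrite card_X_sum.
have -> : (\sum_(k : K) #|fibre k|)%N = (\sum_(k <- Yseq) #|fibre k|)%N.
  rewrite (big_uniq _ uniq_Yseq) [RHS]big_rmcond // => k kY.
  by apply: eq_card0 => v; rewrite inE dirs_notin_Y.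
rewrite (_ : Yseq = kel 0 0 true :: behead Yseq) // big_cons card_fibre_swap.
rewrite (eq_big_seq (fun _ => #|V|)) => [|k kY]; last first.
  have := allP dirs_single (encode k); rewrite /Ycodes behead_map map_f // => /(_ isT).
  by case kb: (dirs (encode k)) => [|b []] // b1; apply: card_fibre_single kb b1.
rewrite big_const_seq count_predT iter_addn_0.
have : (0 < #|V|)%N by apply/card_gt0P; exists 0.
by rewrite [size _]/=; lia.
Qed.

Theorem cayley_diameter2_wreath :
  exists (gT : finGroupType) (X : {set gT}),
    [/\ cayley_conn_set X, cayley_diameter X 2,
        #|X| = (17 * #|V| - 1)%N & #|[set: gT]| = (200 * #|V| ^ 2)%N].
Proof.
exists G, X; split.
- by split; [exact: one_notin_X | exact: invX | exact: gen_X].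
- split; first exact: cayley_within2.
  by split=> //; exists 1%g, (mkG 0 (kel 1 0 false)); exact: not_cayley_within1.
- exact: card_X.
- exact: card_G.
Qed.
End Construction.

Lemma Fp_mulrn_inj p d : prime p -> (0 < d < p)%N -> injective (fun x : 'F_p => x *+ d).
Proof.
move=> p_pr /andP [d_gt0 d_lt_p] x y /=.
have d_nz : d%:R != 0 :> 'F_p.
  rewrite -(dvdn_pcharf (pchar_Fp p_pr)); apply/negP => /dvdn_leq.
  by move/(_ d_gt0); lia.
by rewrite -[x *+ d]mulr_natr -[y *+ d]mulr_natr => /(mulIf d_nz).
Qed.

Local Close Scope ring_scope.

Theorem theorem1 (n : nat) (hn : n = 1 \/ (prime n /\ n %% 10 = 1)) :
  exists (gT : finGroupType) (X : {set gT}),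
    [/\ cayley_conn_set X,
        cayley_diameter X 2,
        #|X| = 17 * n - 1 &
        #|[set: gT]| = 200 * n ^ 2].
Proof.
case: hn => [-> | [n_pr n_mod]].
  have trivial_inj d : (0 < d <= 10)%N -> injective (fun x : 'I_1 => (x *+ d)%R).
    by move=> _ x y _; rewrite (ord1 x) (ord1 y).
  by have := cayley_diameter2_wreath trivial_inj; rewrite card_ord.
have n_gt10 : (10 < n)%N by have := prime_gt1 n_pr; lia.
have Fn_inj d : (0 < d <= 10)%N -> injective (fun x : 'F_n => (x *+ d)%R).
  by move=> /andP [d_gt0 d_le10]; apply: Fp_mulrn_inj; rewrite // d_gt0; lia.
by have := cayley_diameter2_wreath Fn_inj; rewrite card_Fp.
Qed.
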